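(* Let $\mathcal{A}$ be a strong $T_0$-family. For every $\delta>0$ there is $\varepsilon>0$ such that for every uncountable $(1-\varepsilon)$-separated set $\{x_\alpha:\alpha<\omega_1\}$ contained in the unit sphere of $\mathcal{X}_\mathcal{A}$ there are $\alpha<\beta<\omega_1$ with $\|x_\alpha-x_\beta\|_\mathcal{A}>\sqrt2-\delta$ and there are $\xi<\eta<\omega_1$ with $\|x_\xi-x_\eta\|_\mathcal{A}<1+\delta$.
   Context: A set $\mathcal{Y}$ is $\gamma$-separated if $\|y-y'\|\ge\gamma$ for distinct $y,y'\in\mathcal{Y}$. $c_{00}(\omega_1)$ is the set of finitely supported $x\in\mathbb{R}^{\omega_1}$; $\|x\|_\mathcal{A}=\sup_{A\in\mathcal{A}}\sqrt{\sum_{\alpha\in A}x(\alpha)^2}$ and $\mathcal{X}_\mathcal{A}$ is the closure of $c_{00}(\omega_1)$ in $\{x\in\mathbb{R}^{\omega_1}:\|x\|_\mathcal{A}<\infty\}$. For disjoint $A,B$, $A\otimes B=\{\{\alpha,\beta\}:\alpha\in A,\beta\in B\}$. A function $c=(c_0,c_1):[\omega_1]^2\to I\times J$ ($0,1\in I$, $J\ne\emptyset$) is a $T$-coloring if for every uncountable pairwise disjoint family $\{\{a_\xi(0),a_\xi(1)\}:\xi<\omega_1\}$ of pairs and all $(i_0,j_0),(i_1,j_1)\in I\times J$ there are $\xi<\eta$ with $c(\{a_\xi(0),a_\eta(0)\})=(i_0,j_0)$, $c(\{a_\xi(1),a_\eta(1)\})=(i_1,j_1)$; it is a strong $T$-coloring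 if moreover for every uncountable pairwise disjoint family $\{A_\xi:\xi<\omega_1\}$ of finite subsets of $\omega_1$ there are $\xi<\eta$ with $c_0[A_\xi\otimes A_\eta]=\{0\}$ and $\xi<\eta$ with $c_0[A_\xi\otimes A_\eta]=\{1\}$. A strong $T_0$-family is $\mathcal{A}_c=\{a\subseteq\omega_1\text{ finite}:c_0[[a]^2]\subseteq\{0\}\}$ for a strong $T$-coloring $c$. *)

From Stdlib Require Import Reals List.
From Coquelicot Require Import Coquelicot.
Open Scope R_scope.

Definition countable_type (A : Type) : Prop :=
  exists f : A -> nat, forall a b, f a = f b -> a = b.

Definition is_omega1 (W : Type) (lt : W -> W -> Prop) : Prop :=
  well_founded lt /\
  (forall a b c, lt a b -> lt b c -> lt a c) /\
  (forall a b, lt a b \/ a = b \/ lt b a) /\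
  ~ countable_type W /\
  (forall a : W, countable_type {b : W | lt b a}).

(** T-coloring c = (c0,c1) : [W]^2 -> I x J (c given as a symmetric
    function on pairs of distinct points; values on the diagonal are
    irrelevant).  [zero] and [one] are the distinguished colors 0,1 in I. *)
Definition symmetric_coloring {W I J : Type} (c : W -> W -> I * J) : Prop :=
  forall a b, a <> b -> c a b = c b a.

Definition disjoint_pair_family {W : Type} (a : W -> W * W) : Prop :=
  (forall xi, fst (a xi) <> snd (a xi)) /\
  (forall xi eta, xi <> eta ->
     forall z, (z = fst (a xi) \/ z = snd (a xi)) ->
               ~ (z = fst (a eta) \/ z = snd (a eta))).

(** An uncountable pairwise disjoint family of (nonempty) finite subsets,
    indexed by omega_1; finite sets are represented by lists. *)
Definition disjoint_finset_family {W : Type} (A : W -> list W) : Prop :=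
  (forall xi, A xi <> nil) /\
  (forall xi eta, xi <> eta -> forall z, In z (A xi) -> ~ In z (A eta)).

Definition T_coloring {W I J : Type} (lt : W -> W -> Prop) (zero one : I)
    (c : W -> W -> I * J) : Prop :=
  zero <> one /\ inhabited J /\ symmetric_coloring c /\
  forall a : W -> W * W, disjoint_pair_family a ->
  forall p0 p1 : I * J, exists xi eta, lt xi eta /\
    c (fst (a xi)) (fst (a eta)) = p0 /\
    c (snd (a xi)) (snd (a eta)) = p1.

Definition c0_const {W I J : Type} (c : W -> W -> I * J) (i : I)
    (A B : list W) : Prop :=
  forall a b, In a A -> In b B -> fst (c a b) = i.

Definition strong_T_coloring {W I J : Type} (lt : W -> W -> Prop)
    (zero one : I) (c : W -> W -> I * J) : Prop :=
  T_coloring lt zero one c /\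
  forall A : W -> list W, disjoint_finset_family A ->
    (exists xi eta, lt xi eta /\ c0_const c zero (A xi) (A eta)) /\
    (exists xi eta, lt xi eta /\ c0_const c one (A xi) (A eta)).

(** The strong T_0-family A_c: finite sets (duplicate-free lists) a with
    c0[[a]^2] included in {0}. *)
Definition in_family {W I J : Type} (zero : I) (c : W -> W -> I * J)
    (a : list W) : Prop :=
  NoDup a /\ forall x y, In x a -> In y a -> x <> y -> fst (c x y) = zero.

Definition sqsum {W : Type} (x : W -> R) (a : list W) : R :=
  fold_right (fun al s => x al ^ 2 + s) 0 a.

Definition normA {W I J : Type} (zero : I) (c : W -> W -> I * J)
    (x : W -> R) : Rbar :=
  Lub_Rbar (fun v => exists a, in_family zero c a /\ v = sqrt (sqsum x a)).

Definition finitely_supported {W : Type} (y : W -> R) : Prop :=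
  exists l : list W, forall al, ~ In al l -> y al = 0.

Definition vsub {W : Type} (x y : W -> R) : W -> R := fun al => x al - y al.

(** X_A: closure of c_00(omega_1) in {x : ||x||_A < oo}. *)
Definition in_XA {W I J : Type} (zero : I) (c : W -> W -> I * J)
    (x : W -> R) : Prop :=
  (exists r : R, normA zero c x = Finite r) /\
  forall e, 0 < e -> exists y, finitely_supported y /\
    Rbar_lt (normA zero c (vsub x y)) (Finite e).

From Stdlib Require Import Reals List.
From Coquelicot Require Import Coquelicot.
From Stdlib Require Import Lia Lra ZArith.
From Stdlib Require Import Classical ClassicalEpsilon FunctionalExtensionality Cantor.
Open Scope R_scope.

(* Approximate every x_a within e by a finitely supported y_a.  Passing to an
   uncountable subfamily, the supports of the y_a form a Delta-system with root R and the
   y_a nearly agree on R, so that, up to 3e, x_a - x_b is the difference of the tails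
   z_a, z_b (the parts of y_a, y_b off R), which have disjoint supports.  A set of the
   family meeting both tails contains a 0-colored pair between them.  Hence if c_0 is 1
   between the two supports, every set of the family sees only one tail and
   ||x_a - x_b|| <= max(||z_a||, ||z_b||) + 3e; if c_0 is 0 between them, norming sets of
   z_a and z_b combine into one set of the family, and
   ||x_a - x_b|| >= sqrt 2 min(||z_a||, ||z_b||) - 2e.  By separation, all but countably
   many tails have norm > 1 - 5e, and the strong T-coloring provides pairs of both kinds
   among them. *)

(** * Countable sets *)

Definition countable_set {X : Type} (S : X -> Prop) : Prop :=
  exists f : X -> nat, forall a b, S a -> S b -> f a = f b -> a = b.

Lemma countable_set_sub {X} (S T : X -> Prop) :
  (forall a, S a -> T a) -> countable_set T -> countable_set S.
Proof. intros HST [f Hf]. exists f. intros a b Ha Hb. apply Hf; auto. Qed.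

Lemma countable_set_bigunion {X Y} (C : X -> Prop) (B : X -> Y -> Prop) :
  countable_set C -> (forall i, C i -> countable_set (B i)) ->
  countable_set (fun y => exists i, C i /\ B i y).
Proof.
  intros [fC HC] HB.
  destruct (choice (fun i (f : Y -> nat) =>
              C i -> forall a b, B i a -> B i b -> f a = f b -> a = b)) as [code Hcode].
  { intro i. destruct (classic (C i)) as [Ci | nCi].
    - destruct (HB i Ci) as [f Hf]. exists f. auto.
    - exists (fun _ => 0%nat). tauto. }
  exists (fun y => match excluded_middle_informative (exists i, C i /\ B i y) with
           | left H => let i := proj1_sig (constructive_indefinite_description _ H) in
                       Cantor.to_nat (fC i, code i y)
           | right _ => 0%nat end).
  intros a b Ha Hb.
  destruct (excluded_middle_informative (exists i, C i /\ B i a)) as [Ha' | []]; [| exact Ha].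
  destruct (excluded_middle_informative (exists i, C i /\ B i b)) as [Hb' | []]; [| exact Hb].
  destruct (constructive_indefinite_description _ Ha') as [i [Ci Bia]].
  destruct (constructive_indefinite_description _ Hb') as [j [Cj Bjb]].
  intro E. cbv zeta in E. cbn [proj1_sig] in E.
  apply (f_equal Cantor.of_nat) in E. rewrite !Cantor.cancel_of_to in E.
  injection E as Eij Ecode.
  assert (i = j) as <- by (apply HC; auto).
  exact (Hcode i Ci a b Bia Bjb Ecode).
Qed.

Lemma countable_set_singleton {X} (a : X) : countable_set (fun x => x = a).
Proof. exists (fun _ => 0%nat). intros b b' -> -> _. reflexivity. Qed.

Lemma countable_set_subsingleton {X} (S : X -> Prop) :
  (forall a b, S a -> S b -> a = b) -> countable_set S.
Proof. intro H. exists (fun _ => 0%nat). auto. Qed.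

Lemma countable_set_union {X} (S T : X -> Prop) :
  countable_set S -> countable_set T -> countable_set (fun x => S x \/ T x).
Proof.
  intros HS HT.
  apply (countable_set_sub _ (fun x => exists b : bool, True /\ (if b then S x else T x))).
  - intros x [H | H]; [exists true | exists false]; auto.
  - apply countable_set_bigunion.
    + exists (fun b : bool => if b then 1%nat else 0%nat). now intros [] [].
    + intros []; auto.
Qed.

Lemma countable_set_In {X} (l : list X) : countable_set (fun x => In x l).
Proof.
  induction l as [| a l IH].
  - exists (fun _ => 0%nat). intros a b [].
  - apply (countable_set_sub _ (fun x => x = a \/ In x l)).
    + intros x [-> | H]; auto.
    + apply countable_set_union; [apply countable_set_singleton | exact IH].
Qed.

Lemma countable_set_image {X Y} (k : X -> Y) :
  countable_type X -> countable_set (fun y => exists x, k x = y).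
Proof.
  intros [f Hf].
  apply (countable_set_sub _ (fun y => exists x, True /\ y = k x)).
  - intros y [x <-]. eauto.
  - apply countable_set_bigunion; [exists f; auto | intros x _; apply countable_set_singleton].
Qed.

Lemma uncountable_fiber {X L} (S : X -> Prop) (label : X -> L) :
  countable_set (fun _ : L => True) -> ~ countable_set S ->
  exists l, ~ countable_set (fun x => S x /\ label x = l).
Proof.
  intros HL HS. apply NNPP. intro Hall. apply HS.
  apply (countable_set_sub _ (fun x => exists l, True /\ (S x /\ label x = l))).
  - intros x Sx. eauto.
  - apply countable_set_bigunion; [exact HL |].
    intros l _. apply NNPP. eauto.
Qed.

Lemma uncountable_setminus {X} (S T : X -> Prop) :
  ~ countable_set S -> countable_set T -> ~ countable_set (fun x => S x /\ ~ T x).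
Proof.
  intros HS HT HST. apply HS.
  apply (countable_set_sub _ (fun x => (S x /\ ~ T x) \/ T x)).
  - intros x Sx. destruct (classic (T x)); auto.
  - apply countable_set_union; assumption.
Qed.

Lemma uncountable_avoid {X} (S C : X -> Prop) :
  ~ countable_set S -> countable_set C -> exists a, S a /\ ~ C a.
Proof.
  intros HS HC. apply NNPP. intro Hn. apply HS.
  apply (countable_set_sub _ C); [| exact HC].
  intros a Sa. apply NNPP. eauto.
Qed.

(** * Uncountable subsets of omega_1 *)

Definition eq_dec {A : Type} (x y : A) : {x = y} + {x <> y} :=
  excluded_middle_informative (x = y).

Section Omega1.

Variables (W : Type) (lt : W -> W -> Prop).
Hypothesis Hw : is_omega1 W lt.

Lemma omega1_uncountable : ~ countable_set (fun _ : W => True).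
Proof.
  destruct Hw as (_ & _ & _ & Hunc & _). intros [f Hf].
  apply Hunc. exists f. auto.
Qed.

Lemma omega1_trichotomy a b : lt a b \/ a = b \/ lt b a.
Proof. destruct Hw as (_ & _ & H & _). apply H. Qed.

Lemma omega1_irrefl a : ~ lt a a.
Proof.
  destruct Hw as [wf _]. induction (wf a) as [a _ IH]. intro H. exact (IH a H H).
Qed.

Lemma omega1_ordered_pair (P : W -> W -> Prop) :
  (forall a b, P a b -> P b a) ->
  forall a b, a <> b -> P a b -> exists a' b', lt a' b' /\ P a' b'.
Proof.
  intros Psym a b Hab Pab.
  destruct (omega1_trichotomy a b) as [H | [H | H]]; [eauto | contradiction | eauto].
Qed.

Lemma omega1_injective_of_lt (g : W -> W) :
  (forall xi eta, lt xi eta -> g xi <> g eta) ->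
  forall xi eta, xi <> eta -> g xi <> g eta.
Proof.
  intros Hg xi eta Hne.
  destruct (omega1_trichotomy xi eta) as [H | [H | H]]; [auto | contradiction |].
  intro E. exact (Hg eta xi H (eq_sym E)).
Qed.

(* Transfinite recursion along [lt]: [g xi] is chosen outside, and [Good]-above,
   the countable set [{g eta | eta < xi}]. *)
Lemma omega1_sequence (S : W -> Prop) (Good : W -> W -> Prop) :
  (forall C, countable_set C -> exists a, S a /\ ~ C a /\ forall b, C b -> Good b a) ->
  exists g : W -> W, (forall xi, S (g xi)) /\
    (forall xi eta, xi <> eta -> g xi <> g eta) /\
    (forall xi eta, lt xi eta -> Good (g xi) (g eta)).
Proof.
  intros Hnext. destruct Hw as (wf & _ & _ & _ & Hseg).
  set (Img := fun xi (h : forall eta, lt eta xi -> W) (b : W) =>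
                exists p : {eta | lt eta xi}, h (proj1_sig p) (proj2_sig p) = b).
  assert (HImg : forall xi h, countable_set (Img xi h)).
  { intros xi h. apply (countable_set_image (fun p : {eta | lt eta xi} => h _ (proj2_sig p))).
    apply Hseg. }
  set (step := fun xi h =>
         proj1_sig (constructive_indefinite_description _ (Hnext _ (HImg xi h)))).
  assert (Hstep : forall xi h, S (step xi h) /\ ~ Img xi h (step xi h) /\
                               forall b, Img xi h b -> Good b (step xi h)).
  { intros xi h. unfold step. apply proj2_sig. }
  set (g := Fix wf (fun _ => W) step).
  assert (Hg : forall xi, g xi = step xi (fun eta _ => g eta)).
  { intro xi. apply (Fix_eq wf (fun _ => W) step). intros xi' f1 f2 E.
    replace f2 with f1; [reflexivity |].
    apply functional_extensionality_dep. intro eta.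
    apply functional_extensionality_dep. apply E. }
  assert (Hlt : forall xi eta, lt xi eta -> g xi <> g eta /\ Good (g xi) (g eta)).
  { intros xi eta H. destruct (Hstep eta (fun eta _ => g eta)) as (_ & Hout & Hgood).
    rewrite <- Hg in Hout, Hgood.
    split.
    - intro E. apply Hout. exists (exist _ xi H). exact E.
    - apply Hgood. exists (exist _ xi H). reflexivity. }
  exists g. split; [| split].
  - intro xi. rewrite Hg. apply Hstep.
  - apply omega1_injective_of_lt. apply Hlt.
  - apply Hlt.
Qed.

Lemma omega1_image_uncountable (g : W -> W) :
  (forall xi eta, xi <> eta -> g xi <> g eta) ->
  ~ countable_set (fun a => exists xi, g xi = a).
Proof.
  intros Hg [f Hf]. apply omega1_uncountable. exists (fun xi => f (g xi)).
  intros a b _ _ E. apply NNPP. intro Hne. apply (Hg a b Hne). apply Hf; eauto.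
Qed.

Lemma omega1_enumeration (S : W -> Prop) :
  ~ countable_set S ->
  exists g : W -> W, (forall xi, S (g xi)) /\ (forall xi eta, xi <> eta -> g xi <> g eta).
Proof.
  intro HS. destruct (omega1_sequence S (fun _ _ => True)) as (g & HgS & Hginj & _).
  - intros C HC. destruct (uncountable_avoid S C HS HC) as [a Ha]. exists a. tauto.
  - eauto.
Qed.

Section DeltaSystem.

Variable V : Type.

Lemma disjoint_subfamily (F : W -> list V) (S : W -> Prop) :
  ~ countable_set S -> (forall p, countable_set (fun a => S a /\ In p (F a))) ->
  exists S' : W -> Prop, (forall a, S' a -> S a) /\ ~ countable_set S' /\
    forall a b, S' a -> S' b -> a <> b -> forall p, In p (F a) -> ~ In p (F b).
Proof.
  intros HS Hpt.
  destruct (omega1_sequence S (fun b a => forall p, In p (F b) -> ~ In p (F a)))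
    as (g & HgS & Hginj & Hgood).
  - intros C HC.
    set (Meet := fun a => exists b, C b /\ exists p, In p (F b) /\ (S a /\ In p (F a))).
    assert (HMeet : countable_set Meet).
    { apply countable_set_bigunion; [exact HC |]. intros b _.
      apply countable_set_bigunion; [apply countable_set_In | auto]. }
    destruct (uncountable_avoid S _ HS (countable_set_union C Meet HC HMeet)) as [a [Sa Ha]].
    exists a. split; [exact Sa | split; [tauto |]].
    intros b Cb p Hb Ha'. apply Ha. right. exists b. eauto.
  - exists (fun a => exists xi, g xi = a). split; [| split].
    + intros a [xi <-]. apply HgS.
    + apply omega1_image_uncountable, Hginj.
    + intros a b [xi <-] [eta <-] Hne p Hxi Heta.
      destruct (omega1_trichotomy xi eta) as [H | [-> | H]].
      * exact (Hgood xi eta H p Hxi Heta).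
      * contradiction.
      * exact (Hgood eta xi H p Heta Hxi).
Qed.

Lemma delta_system (n : nat) (F : W -> list V) (S : W -> Prop) :
  ~ countable_set S -> (forall a, S a -> length (F a) <= n)%nat ->
  exists (root : list V) (S' : W -> Prop), (forall a, S' a -> S a) /\ ~ countable_set S' /\
    forall a b, S' a -> S' b -> a <> b -> forall p, In p (F a) -> In p (F b) -> In p root.
Proof.
  revert F S. induction n as [| n IH]; intros F S HS Hlen.
  - exists nil, S. split; [auto | split; [exact HS |]].
    intros a b Sa _ _ p Hp _. specialize (Hlen a Sa). destruct (F a); [exact Hp | cbn in Hlen; lia].
  - destruct (classic (exists p, ~ countable_set (fun a => S a /\ In p (F a))))
      as [[p Hp] | Hno].
    + destruct (IH (fun a => remove eq_dec p (F a)) _ Hp) as (root & S' & HS' & US' & Hroot).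
      { intros a [Sa Hpa]. specialize (Hlen a Sa).
        pose proof (remove_length_lt eq_dec (F a) p Hpa). lia. }
      exists (p :: root), S'. split; [intros a Ha; apply HS', Ha | split; [exact US' |]].
      intros a b Sa Sb Hab q Hqa Hqb. destruct (eq_dec q p) as [-> | Hq]; [now left | right].
      apply (Hroot a b Sa Sb Hab); apply in_in_remove; auto.
    + destruct (disjoint_subfamily F S HS) as (S' & HS' & US' & Hdisj).
      { intro p. apply NNPP. eauto. }
      exists nil, S'. split; [exact HS' | split; [exact US' |]].
      intros a b Sa Sb Hab p Ha Hb. exact (Hdisj a b Sa Sb Hab p Ha Hb).
Qed.

End DeltaSystem.

Lemma strong_coloring_pair {I J} (zero one : I) (c : W -> W -> I * J)
    (S : W -> Prop) (F : W -> list W) :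
  strong_T_coloring lt zero one c -> ~ countable_set S ->
  (forall a, S a -> F a <> nil) ->
  (forall a b, S a -> S b -> a <> b -> forall p, In p (F a) -> ~ In p (F b)) ->
  forall i, i = zero \/ i = one ->
  exists a b, S a /\ S b /\ a <> b /\ c0_const c i (F a) (F b).
Proof.
  intros [_ Hstrong] HS Hne Hdisj i Hi.
  destruct (omega1_enumeration S HS) as (g & HgS & Hginj).
  assert (Hfam : disjoint_finset_family (fun xi => F (g xi))).
  { split; [intro xi; apply Hne, HgS |].
    intros xi eta Hxe. apply Hdisj; auto. }
  assert (Hpair : forall xi eta, lt xi eta -> c0_const c i (F (g xi)) (F (g eta)) ->
                    exists a b, S a /\ S b /\ a <> b /\ c0_const c i (F a) (F b)).
  { intros xi eta Hlt Hc. exists (g xi), (g eta). repeat split; auto.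
    apply Hginj. intros ->. exact (omega1_irrefl eta Hlt). }
  destruct (Hstrong _ Hfam) as [(xi & eta & Hlt & Hc) (xi' & eta' & Hlt' & Hc')].
  destruct Hi as [-> | ->]; eauto.
Qed.

End Omega1.

(** * Square sums and the norm of X_A *)

Definition inb {A : Type} (l : list A) (z : A) : bool :=
  if in_dec eq_dec z l then true else false.

Lemma inb_spec {A} (l : list A) z : inb l z = true <-> In z l.
Proof. unfold inb. destruct (in_dec eq_dec z l); split; easy. Qed.

Lemma inb_false {A} (l : list A) z : inb l z = false <-> ~ In z l.
Proof. unfold inb. destruct (in_dec eq_dec z l); split; easy. Qed.

Definition l2 {V : Type} (f : V -> R) (l : list V) : R := sqrt (sqsum f l).

Section SquareSums.

Variable V : Type.
Implicit Types (f g u v : V -> R) (l : list V).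

Lemma sqsum_nonneg f l : 0 <= sqsum f l.
Proof. induction l; simpl; [lra | nra]. Qed.

Lemma sqsum_ext f g l : (forall z, In z l -> f z = g z) -> sqsum f l = sqsum g l.
Proof. induction l; simpl; intro H; [reflexivity |]. rewrite H, IHl; auto. Qed.

Lemma sqsum_le f g l :
  (forall z, In z l -> Rabs (f z) <= Rabs (g z)) -> sqsum f l <= sqsum g l.
Proof.
  induction l as [| a l IH]; simpl; intro H; [lra |].
  assert (f a ^ 2 <= g a ^ 2).
  { rewrite <- (pow2_abs (f a)), <- (pow2_abs (g a)).
    specialize (H a (or_introl eq_refl)). pose proof (Rabs_pos (f a)). nra. }
  specialize (IH (fun z Hz => H z (or_intror Hz))). lra.
Qed.

Lemma sqsum_opp f l : sqsum (fun z => - f z) l = sqsum f l.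
Proof. induction l; simpl; [reflexivity |]. rewrite IHl. ring. Qed.

Lemma sqsum_app f l1 l2 : sqsum f (l1 ++ l2) = sqsum f l1 + sqsum f l2.
Proof. induction l1; simpl; lra. Qed.

Lemma sqsum_filter f (P : V -> bool) l :
  (forall z, In z l -> P z = false -> f z = 0) -> sqsum f (filter P l) = sqsum f l.
Proof.
  induction l as [| a l IH]; simpl; intro H; [reflexivity |].
  destruct (P a) eqn:E; simpl; rewrite IH; auto.
  rewrite H; auto. ring.
Qed.

Lemma sqsum_le_length f l h :
  (forall z, In z l -> Rabs (f z) <= h) -> sqsum f l <= INR (length l) * h ^ 2.
Proof.
  induction l as [| a l IH]; intro H; [simpl; lra |].
  unfold sqsum; cbn [fold_right length]; fold (sqsum f l). rewrite S_INR.
  assert (f a ^ 2 <= h ^ 2).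
  { rewrite <- (pow2_abs (f a)). specialize (H a (or_introl eq_refl)).
    pose proof (Rabs_pos (f a)). nra. }
  specialize (IH (fun z Hz => H z (or_intror Hz))). lra.
Qed.

(* Only the (at most [length root]) distinct points of [l] lying in [root] count. *)
Lemma sqsum_le_support f l (root : list V) h :
  NoDup l -> (forall z, In z l -> ~ In z root -> f z = 0) ->
  (forall z, In z root -> Rabs (f z) <= h) -> sqsum f l <= INR (length root) * h ^ 2.
Proof.
  intros Hl Hsupp Hh.
  rewrite <- (sqsum_filter f (inb root)).
  2: { intros z Hz Hn. apply Hsupp, inb_false; assumption. }
  assert (Hlen : (length (filter (inb root) l) <= length root)%nat).
  { apply NoDup_incl_length; [apply NoDup_filter, Hl |].
    intros z Hz. apply filter_In in Hz. apply inb_spec, Hz. }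
  eapply Rle_trans.
  - apply sqsum_le_length. intros z Hz. apply filter_In in Hz.
    apply Hh, inb_spec, Hz.
  - apply Rmult_le_compat_r; [apply pow2_ge_0 | apply le_INR, Hlen].
Qed.

Definition dot f g l : R := fold_right (fun z s => f z * g z + s) 0 l.

Lemma cauchy_schwarz f g l : dot f g l ^ 2 <= sqsum f l * sqsum g l.
Proof.
  induction l as [| a l IH]; simpl; [lra |].
  pose proof (sqsum_nonneg f l) as HA. pose proof (sqsum_nonneg g l) as HB.
  set (A := sqsum f l) in *. set (B := sqsum g l) in *. set (C := dot f g l) in *.
  set (x := f a). set (y := g a).
  assert (Hxy : 2 * C * x * y <= A * y ^ 2 + B * x ^ 2).
  { assert (Hs : 0 <= A * y ^ 2 + B * x ^ 2)
      by (pose proof (pow2_ge_0 x); pose proof (pow2_ge_0 y); nra).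
    assert (Hsq : (2 * C * x * y) ^ 2 <= (A * y ^ 2 + B * x ^ 2) ^ 2).
    { assert (0 <= x ^ 2 * y ^ 2 * (A * B - C ^ 2))
        by (apply Rmult_le_pos; [apply Rmult_le_pos; apply pow2_ge_0 | lra]).
      pose proof (pow2_ge_0 (A * y ^ 2 - B * x ^ 2)). nra. }
    nra. }
  nra.
Qed.

Lemma l2_ext f g l : (forall z, In z l -> f z = g z) -> l2 f l = l2 g l.
Proof. intro H. unfold l2. rewrite (sqsum_ext f g l H). reflexivity. Qed.

Lemma l2_le f g l : (forall z, In z l -> Rabs (f z) <= Rabs (g z)) -> l2 f l <= l2 g l.
Proof. intro H. apply sqrt_le_1_alt, sqsum_le, H. Qed.

Lemma l2_opp f l : l2 (fun z => - f z) l = l2 f l.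
Proof. unfold l2. rewrite sqsum_opp. reflexivity. Qed.

Lemma l2_add_le f g l : l2 (fun z => f z + g z) l <= l2 f l + l2 g l.
Proof.
  unfold l2.
  assert (E : sqsum (fun z => f z + g z) l = sqsum f l + sqsum g l + 2 * dot f g l).
  { induction l; simpl; [lra |]. rewrite IHl. ring. }
  pose proof (sqsum_nonneg f l) as HA. pose proof (sqsum_nonneg g l) as HB.
  assert (Hdot : dot f g l <= sqrt (sqsum f l) * sqrt (sqsum g l)).
  { rewrite <- sqrt_mult by assumption.
    apply Rle_trans with (Rabs (dot f g l)); [apply Rle_abs |].
    rewrite <- sqrt_Rsqr_abs. apply sqrt_le_1_alt.
    pose proof (cauchy_schwarz f g l). unfold Rsqr. nra. }
  rewrite E. apply Rsqr_incr_0_var.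
  - rewrite Rsqr_sqrt by (rewrite <- E; apply sqsum_nonneg). unfold Rsqr.
    pose proof (sqrt_sqrt _ HA). pose proof (sqrt_sqrt _ HB). nra.
  - pose proof (sqrt_pos (sqsum f l)). pose proof (sqrt_pos (sqsum g l)). lra.
Qed.

Lemma l2_vsub_le u v l : l2 (vsub u v) l <= l2 u l + l2 v l.
Proof. rewrite <- (l2_opp v). apply l2_add_le. Qed.

Lemma l2_vsub_sym u v l : l2 (vsub u v) l = l2 (vsub v u) l.
Proof. unfold vsub. rewrite <- l2_opp. apply l2_ext. intros. ring. Qed.

End SquareSums.

Section NormA.

Variables (W I J : Type) (zero one : I) (c : W -> W -> I * J).

Lemma normA_ge_l2 x l : in_family zero c l -> Rbar_le (l2 x l) (normA zero c x).
Proof. intro Hl. apply (Lub_Rbar_correct _). exists l. auto. Qed.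

Lemma normA_le x (M : R) :
  (forall l, in_family zero c l -> l2 x l <= M) -> Rbar_le (normA zero c x) M.
Proof. intro H. apply (Lub_Rbar_correct _). intros v [l [Hl ->]]. apply H, Hl. Qed.

Lemma l2_le_normA x (M : R) l :
  Rbar_le (normA zero c x) M -> in_family zero c l -> l2 x l <= M.
Proof.
  intros HM Hl. exact (Rbar_le_trans (Finite _) _ (Finite M) (normA_ge_l2 x l Hl) HM).
Qed.

Lemma normA_vsub_sym u v : normA zero c (vsub u v) = normA zero c (vsub v u).
Proof.
  apply Lub_Rbar_eqset. intro r.
  split; intros [l [Hl ->]]; exists l; split; auto; apply l2_vsub_sym.
Qed.

(* A point on each side would give a 1-colored pair inside a 0-homogeneous set. *)
Lemma family_meets_one_side A B l :
  zero <> one -> c0_const c one A B -> (forall z, In z A -> ~ In z B) ->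
  in_family zero c l -> (forall z, In z l -> ~ In z A) \/ (forall z, In z l -> ~ In z B).
Proof.
  intros Hzo Hone Hdisj [_ Hl].
  destruct (classic (exists z, In z l /\ In z A)) as [[a [Hla Ha]] | HA];
    [right | left; eauto].
  intros b Hlb Hb.
  assert (a <> b) by (intros ->; exact (Hdisj b Ha Hb)).
  apply Hzo. rewrite <- (Hl a b Hla Hlb H). apply Hone; assumption.
Qed.

Lemma family_app A B la lb :
  symmetric_coloring c -> c0_const c zero A B -> (forall z, In z A -> ~ In z B) ->
  in_family zero c la -> in_family zero c lb ->
  in_family zero c (filter (inb A) la ++ filter (inb B) lb).
Proof.
  intros Hsym Hzero Hdisj [Hnda Ha] [Hndb Hb].
  assert (HinA : forall z, In z (filter (inb A) la) <-> In z la /\ In z A)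
    by (intro z; rewrite filter_In, inb_spec; tauto).
  assert (HinB : forall z, In z (filter (inb B) lb) <-> In z lb /\ In z B)
    by (intro z; rewrite filter_In, inb_spec; tauto).
  split.
  - apply NoDup_app; try apply NoDup_filter; auto.
    intros z HzA HzB. apply HinA in HzA. apply HinB in HzB. exact (Hdisj z (proj2 HzA) (proj2 HzB)).
  - intros z z' Hz Hz' Hne. apply in_app_or in Hz. apply in_app_or in Hz'.
    rewrite HinA, HinB in Hz. rewrite HinA, HinB in Hz'.
    destruct Hz as [[] | []], Hz' as [[] | []].
    + apply Ha; auto.
    + apply Hzero; auto.
    + rewrite Hsym by assumption. apply Hzero; auto.
    + apply Hb; auto.
Qed.

End NormA.

Lemma countable_Z : countable_set (fun _ : Z => True).
Proof.
  exists (fun z => Cantor.to_nat (Z.to_nat z, Z.to_nat (- z))). intros a b _ _ E.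
  apply (f_equal Cantor.of_nat) in E. rewrite !Cantor.cancel_of_to in E.
  injection E. lia.
Qed.

Lemma up_eq_close u v : up u = up v -> Rabs (u - v) < 1.
Proof.
  intro E. destruct (archimed u), (archimed v). rewrite E in *. apply Rabs_def1; lra.
Qed.

(* Pigeonhole on the grid [h Z] at each of the finitely many coordinates of [root]. *)
Lemma uncountable_close_on {X V} (y : X -> V -> R) (h : R) (root : list V) (S : X -> Prop) :
  0 < h -> ~ countable_set S ->
  exists S', (forall a, S' a -> S a) /\ ~ countable_set S' /\
    forall a b, S' a -> S' b -> forall g, In g root -> Rabs (y a g - y b g) < h.
Proof.
  intro Hh. revert S. induction root as [| g0 root IH]; intros S HS.
  - exists S. repeat split; auto. intros a b _ _ g [].
  - destruct (IH S HS) as (S1 & HS1 & US1 & Hclose).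
    destruct (uncountable_fiber S1 (fun a => up (y a g0 / h)) countable_Z US1) as [k Hk].
    exists (fun a => S1 a /\ up (y a g0 / h) = k).
    split; [intros a [Ha _]; auto | split; [exact Hk |]].
    intros a b [Sa Ea] [Sb Eb] g [<- | Hg]; [| apply Hclose; auto].
    rewrite <- Eb in Ea. apply up_eq_close in Ea.
    replace (y a g0 - y b g0) with (h * (y a g0 / h - y b g0 / h)) by (field; lra).
    rewrite Rabs_mult, Rabs_right by lra. nra.
Qed.

(** * Separated families in the unit sphere *)

Section SeparatedFamily.

Variables (W : Type) (lt : W -> W -> Prop).
Hypothesis Hw : is_omega1 W lt.
Variables (I J : Type) (zero one : I) (c : W -> W -> I * J).
Hypothesis Hc : strong_T_coloring lt zero one c.
Variable e : R.
Hypothesis He : 0 < e <= 1 / 20.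
Variable x : W -> W -> R.
Hypothesis Hx_unit : forall a l, in_family zero c l -> l2 (x a) l <= 1.
Hypothesis Hsep : forall a b, a <> b -> Rbar_le (1 - e) (normA zero c (vsub (x a) (x b))).
Variables (y : W -> W -> R) (F : W -> list W).
Hypothesis Hy_supp : forall a z, ~ In z (F a) -> y a z = 0.
Hypothesis Hy_close : forall a l, in_family zero c l -> l2 (vsub (x a) (y a)) l <= e.

Let family := in_family zero c.
Let zero_neq_one : zero <> one := proj1 (proj1 Hc).
Let coloring_symmetric : symmetric_coloring c := proj1 (proj2 (proj2 (proj1 Hc))).

Lemma l2_approximant_le a l : family l -> l2 (y a) l <= 1 + e.
Proof.
  intro Hl. rewrite (l2_ext _ (y a) (vsub (x a) (vsub (x a) (y a))))
    by (intros; unfold vsub; ring).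
  pose proof (l2_vsub_le _ (x a) (vsub (x a) (y a)) l).
  pose proof (Hx_unit a l Hl). pose proof (Hy_close a l Hl). lra.
Qed.

Section Tails.

Variables (root : list W) (S : W -> Prop).

Definition root_part a z : R := if inb root z then y a z else 0.
Definition tail a z : R := if inb root z then 0 else y a z.
Definition tail_support a : list W := filter (fun z => negb (inb root z)) (F a).

Hypothesis Htail_disj : forall a b, S a -> S b -> a <> b ->
  forall z, In z (tail_support a) -> ~ In z (tail_support b).
Hypothesis Hroot_close : forall a b l, S a -> S b -> NoDup l ->
  l2 (vsub (root_part a) (root_part b)) l <= e.

Lemma tail_vanishes a z : ~ In z (tail_support a) -> tail a z = 0.
Proof.
  unfold tail, tail_support. intro Hz. destruct (inb root z) eqn:E; [reflexivity |].
  apply Hy_supp. intro HF. apply Hz, filter_In. rewrite E. auto.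
Qed.

Lemma abs_tail_le a z : Rabs (tail a z) <= Rabs (y a z).
Proof. unfold tail. destruct (inb root z); [rewrite Rabs_R0; apply Rabs_pos | lra]. Qed.

Lemma l2_tail_le a l : family l -> l2 (tail a) l <= 1 + e.
Proof.
  intro Hl. eapply Rle_trans; [| apply (l2_approximant_le a l Hl)].
  apply l2_le. intros. apply abs_tail_le.
Qed.

Lemma l2_tail_diff_le_one_sided a b l M :
  l2 (tail a) l <= M -> l2 (tail b) l <= M ->
  (forall z, In z l -> ~ In z (tail_support a)) \/
  (forall z, In z l -> ~ In z (tail_support b)) ->
  l2 (vsub (tail a) (tail b)) l <= M.
Proof.
  intros Ha Hb [Hout | Hout].
  - eapply Rle_trans; [| exact Hb]. apply l2_le. intros z Hz.
    unfold vsub. rewrite (tail_vanishes a z (Hout z Hz)), Rminus_0_l, Rabs_Ropp. lra.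
  - eapply Rle_trans; [| exact Ha]. apply l2_le. intros z Hz.
    unfold vsub. rewrite (tail_vanishes b z (Hout z Hz)), Rminus_0_r. lra.
Qed.

(* [x a - y a], [x b - y b] and the difference of the root parts contribute [e] each. *)
Lemma l2_dist_le_tails a b l : S a -> S b -> family l ->
  l2 (vsub (x a) (x b)) l <= 3 * e + l2 (vsub (tail a) (tail b)) l.
Proof.
  intros Sa Sb Hl.
  rewrite (l2_ext _ _ (fun z => vsub (vsub (x a) (y a)) (vsub (x b) (y b)) z +
             (vsub (root_part a) (root_part b) z + vsub (tail a) (tail b) z)))
    by (intros z _; unfold vsub, root_part, tail; destruct (inb root z); ring).
  eapply Rle_trans; [apply l2_add_le |].
  pose proof (l2_vsub_le _ (vsub (x a) (y a)) (vsub (x b) (y b)) l).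
  pose proof (l2_add_le _ (vsub (root_part a) (root_part b)) (vsub (tail a) (tail b)) l).
  pose proof (Hy_close a l Hl). pose proof (Hy_close b l Hl).
  pose proof (Hroot_close a b l Sa Sb (proj1 Hl)). lra.
Qed.

Lemma l2_tails_le_dist a b l : family l ->
  l2 (vsub (tail a) (tail b)) l <= 2 * e + l2 (vsub (x a) (x b)) l.
Proof.
  intro Hl. eapply Rle_trans.
  { apply (l2_le _ _ (vsub (y a) (y b))). intros z _. unfold vsub, tail.
    destruct (inb root z); [rewrite Rminus_0_r, Rabs_R0; apply Rabs_pos | lra]. }
  rewrite (l2_ext _ _ (vsub (vsub (x a) (x b)) (vsub (vsub (x a) (y a)) (vsub (x b) (y b)))))
    by (intros; unfold vsub; ring).
  pose proof (l2_vsub_le _ (vsub (x a) (x b)) (vsub (vsub (x a) (y a)) (vsub (x b) (y b))) l).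
  pose proof (l2_vsub_le _ (vsub (x a) (y a)) (vsub (x b) (y b)) l).
  pose proof (Hy_close a l Hl). pose proof (Hy_close b l Hl). lra.
Qed.

Lemma sqsum_tails_split a b la lb : S a -> S b -> a <> b ->
  sqsum (vsub (tail a) (tail b))
    (filter (inb (tail_support a)) la ++ filter (inb (tail_support b)) lb) =
  sqsum (tail a) la + sqsum (tail b) lb.
Proof.
  intros Sa Sb Hab. rewrite sqsum_app. f_equal.
  - rewrite (sqsum_ext _ _ (tail a)).
    + apply sqsum_filter. intros z _ Hz. apply tail_vanishes, inb_false, Hz.
    + intros z Hz. apply filter_In in Hz. destruct Hz as [_ Hz%inb_spec].
      unfold vsub. rewrite (tail_vanishes b z (Htail_disj a b Sa Sb Hab z Hz)). ring.
  - rewrite (sqsum_ext _ _ (fun z => - tail b z)), sqsum_opp.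
    + apply sqsum_filter. intros z _ Hz. apply tail_vanishes, inb_false, Hz.
    + intros z Hz. apply filter_In in Hz. destruct Hz as [_ Hz%inb_spec].
      unfold vsub. rewrite (tail_vanishes a z). { ring. }
      intro Hza. exact (Htail_disj a b Sa Sb Hab z Hza Hz).
Qed.

Definition large_tail a : Prop := exists l, family l /\ 1 - 5 * e < l2 (tail a) l.

Lemma sq_lt_sqsum_of_lt_l2 (t : R) (f : W -> R) l : 0 <= t -> t < l2 f l -> t ^ 2 < sqsum f l.
Proof. intros Ht Hlt. apply sqrt_lt_0_alt. rewrite sqrt_pow2 by exact Ht. exact Hlt. Qed.

(* Norming sets of two large tails with 0-colored supports combine into one set of the
   family, on which the disjoint tails add up in square. *)
Lemma dist_gt_of_zero_colored a b : S a -> S b -> a <> b ->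
  c0_const c zero (tail_support a) (tail_support b) -> large_tail a -> large_tail b ->
  exists l, family l /\ sqrt 2 - 20 * e < l2 (vsub (x a) (x b)) l.
Proof.
  intros Sa Sb Hab Hzero [la [Hla Ga]] [lb [Hlb Gb]].
  set (l := filter (inb (tail_support a)) la ++ filter (inb (tail_support b)) lb).
  assert (Hl : family l).
  { apply family_app; [exact coloring_symmetric | exact Hzero | | exact Hla | exact Hlb].
    apply Htail_disj; assumption. }
  exists l. split; [exact Hl |].
  pose proof (l2_tails_le_dist a b l Hl) as Hdist.
  assert (Hsplit : sqsum (vsub (tail a) (tail b)) l = sqsum (tail a) la + sqsum (tail b) lb)
    by exact (sqsum_tails_split a b la lb Sa Sb Hab).
  unfold l2 at 1 in Hdist. rewrite Hsplit in Hdist.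
  assert (Hs : 0 <= 1 - 5 * e) by lra.
  pose proof (sq_lt_sqsum_of_lt_l2 _ _ _ Hs Ga). pose proof (sq_lt_sqsum_of_lt_l2 _ _ _ Hs Gb).
  assert (Hsum : sqrt 2 * (1 - 5 * e) < sqrt (sqsum (tail a) la + sqsum (tail b) lb)).
  { rewrite <- (sqrt_pow2 (1 - 5 * e)) by exact Hs. rewrite <- sqrt_mult_alt by lra.
    apply sqrt_lt_1_alt. split; [apply Rmult_le_pos; [lra | apply pow2_ge_0] | lra]. }
  pose proof (sqrt_sqrt 2 ltac:(lra)). pose proof (sqrt_pos 2).
  assert (sqrt 2 < 2) by nra.
  assert (e * sqrt 2 < 2 * e) by nra.
  lra.
Qed.


Lemma large_tail_support_nonempty a : large_tail a -> tail_support a <> nil.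
Proof.
  intros [l [_ Hl]] Hnil.
  assert (E : sqsum (tail a) l = 0).
  { clear Hl. induction l as [| z l IH]; simpl; [reflexivity |].
    rewrite IH, tail_vanishes by (rewrite Hnil; auto). ring. }
  unfold l2 in Hl. rewrite E, sqrt_0 in Hl. lra.
Qed.

(* Contradicts separation: the bound is [3 e + (1 - 5 e) = 1 - 2 e]. *)
Lemma small_tails_not_one_sided a b : S a -> S b -> a <> b ->
  ~ large_tail a -> ~ large_tail b ->
  ~ (forall l, family l -> (forall z, In z l -> ~ In z (tail_support a)) \/
                           (forall z, In z l -> ~ In z (tail_support b))).
Proof.
  intros Sa Sb Hab Ha Hb Hside.
  assert (Hsmall : forall a', ~ large_tail a' -> forall l, family l -> l2 (tail a') l <= 1 - 5 * e).
  { intros a' Ha' l Hl. apply Rnot_lt_le. intro. apply Ha'. exists l. split; assumption. }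
  assert (Hbound : Rbar_le (normA zero c (vsub (x a) (x b))) (1 - 2 * e)).
  { apply normA_le. intros l Hl.
    pose proof (l2_dist_le_tails a b l Sa Sb Hl).
    pose proof (l2_tail_diff_le_one_sided a b l _ (Hsmall a Ha l Hl) (Hsmall b Hb l Hl)
                  (Hside l Hl)).
    lra. }
  pose proof (Rbar_le_trans (Finite _) _ (Finite _) (Hsep a b Hab) Hbound) as H. simpl in H. lra.
Qed.

Hypothesis HS : ~ countable_set S.

Lemma countable_small_tails : countable_set (fun a => S a /\ ~ large_tail a).
Proof.
  apply (countable_set_sub _ (fun a => (S a /\ ~ large_tail a /\ tail_support a = nil) \/
                                       (S a /\ ~ large_tail a /\ tail_support a <> nil))).
  { intros a [Sa Ha]. destruct (classic (tail_support a = nil)); tauto. }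
  apply countable_set_union.
  - apply countable_set_subsingleton. intros a b (Sa & Ha & Ea) (Sb & Hb & Eb).
    apply NNPP. intro Hab. apply (small_tails_not_one_sided a b Sa Sb Hab Ha Hb).
    intros l _. left. rewrite Ea. intros z _ [].
  - apply NNPP. intro Hunc.
    destruct (strong_coloring_pair W lt Hw zero one c _ tail_support Hc Hunc) with (i := one)
      as (a & b & (Sa & Ha & _) & (Sb & Hb & _) & Hab & Hone);
      [tauto | intros a b Ha Hb; apply Htail_disj; tauto | now right |].
    apply (small_tails_not_one_sided a b Sa Sb Hab Ha Hb). intros l Hl.
    apply (family_meets_one_side _ _ _ zero one c); [exact zero_neq_one | exact Hone | | exact Hl].
    apply Htail_disj; assumption.
Qed.

Lemma separated_family_pairs :
  (exists a b, lt a b /\ Rbar_lt (sqrt 2 - 20 * e) (normA zero c (vsub (x a) (x b)))) /\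
  (exists a b, lt a b /\ Rbar_lt (normA zero c (vsub (x a) (x b))) (1 + 20 * e)).
Proof.
  set (Large := fun a => S a /\ ~ (S a /\ ~ large_tail a)).
  assert (HL : forall a, Large a -> S a /\ large_tail a).
  { intros a [Sa Ha]. split; [exact Sa |]. apply NNPP. tauto. }
  assert (Hpair : forall i, i = zero \/ i = one -> exists a b, Large a /\ Large b /\ a <> b /\
                    c0_const c i (tail_support a) (tail_support b)).
  { apply (strong_coloring_pair W lt Hw zero one c Large tail_support Hc).
    - exact (uncountable_setminus _ _ HS countable_small_tails).
    - intros a Ha. apply large_tail_support_nonempty, HL, Ha.
    - intros a b Ha Hb. apply Htail_disj; apply HL; assumption. }
  assert (Hsym : forall (P : Rbar -> Prop) a b,
            P (normA zero c (vsub (x a) (x b))) -> P (normA zero c (vsub (x b) (x a))))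
    by (intros P a b; rewrite normA_vsub_sym; auto).
  split.
  - destruct (Hpair zero (or_introl eq_refl))
      as (a & b & (Sa & Ha)%HL & (Sb & Hb)%HL & Hab & Hzero).
    destruct (dist_gt_of_zero_colored a b Sa Sb Hab Hzero Ha Hb) as (l & Hl & Hgt).
    eapply (omega1_ordered_pair W lt Hw
              (fun a b => Rbar_lt (sqrt 2 - 20 * e) (normA zero c (vsub (x a) (x b))))
              (fun a b => Hsym (Rbar_lt (sqrt 2 - 20 * e)) a b) a b Hab).
    apply (Rbar_lt_le_trans _ (l2 (vsub (x a) (x b)) l)); [exact Hgt | apply normA_ge_l2, Hl].
  - destruct (Hpair one (or_intror eq_refl)) as (a & b & (Sa & _)%HL & (Sb & _)%HL & Hab & Hone).
    eapply (omega1_ordered_pair W lt Hw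
              (fun a b => Rbar_lt (normA zero c (vsub (x a) (x b))) (1 + 20 * e))
              (fun a b => Hsym (fun r => Rbar_lt r (1 + 20 * e)) a b) a b Hab).
    apply (Rbar_le_lt_trans _ (Finite (1 + 4 * e))); [| simpl; lra].
    apply normA_le. intros l Hl.
    pose proof (l2_dist_le_tails a b l Sa Sb Hl).
    assert (Hside := family_meets_one_side _ _ _ _ _ c _ _ l zero_neq_one Hone
                       (Htail_disj a b Sa Sb Hab) Hl).
    pose proof (l2_tail_diff_le_one_sided a b l _ (l2_tail_le a l Hl) (l2_tail_le b l Hl) Hside).
    lra.
Qed.

End Tails.

Lemma uniform_subfamily : exists (root : list W) (S : W -> Prop), ~ countable_set S /\
  (forall a b, S a -> S b -> a <> b ->
     forall z, In z (tail_support root a) -> ~ In z (tail_support root b)) /\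
  (forall a b l, S a -> S b -> NoDup l -> l2 (vsub (root_part root a) (root_part root b)) l <= e).
Proof.
  destruct (uncountable_fiber (fun _ => True) (fun a => length (F a))
              (ex_intro _ (fun n => n) (fun a b _ _ E => E)) (omega1_uncountable W lt Hw))
    as [n Hn].
  destruct (delta_system W lt Hw W n F _ Hn) as (root & S1 & _ & US1 & Hcore).
  { intros a [_ <-]. lia. }
  set (h := e / (INR (length root) + 1)).
  assert (Hlen : 0 <= INR (length root)) by apply pos_INR.
  assert (Hh : 0 < h) by (apply Rdiv_lt_0_compat; lra).
  destruct (uncountable_close_on y h root S1 Hh US1) as (S & HS1 & US & Hclose).
  exists root, S. split; [exact US | split].
  - intros a b Sa Sb Hab z Hza Hzb.
    apply filter_In in Hza as [Hza Hra]. apply filter_In in Hzb as [Hzb _].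
    apply Bool.negb_true_iff, inb_false in Hra.
    exact (Hra (Hcore a b (HS1 a Sa) (HS1 b Sb) Hab z Hza Hzb)).
  - intros a b l Sa Sb Hl. unfold l2. rewrite <- (sqrt_pow2 e) by lra. apply sqrt_le_1_alt.
    eapply Rle_trans; [apply (sqsum_le_support _ _ l root h Hl) |].
    + intros z _ Hz. unfold vsub, root_part. apply inb_false in Hz. rewrite Hz. ring.
    + intros z Hz. unfold vsub, root_part. apply inb_spec in Hz as Hz'. rewrite Hz'.
      left. apply Hclose; assumption.
    + assert (E : h * (INR (length root) + 1) = e) by (unfold h; field; lra).
      rewrite <- E. pose proof (pow2_ge_0 h). nra.
Qed.

End SeparatedFamily.

Lemma finitely_supported_approximants {W I J : Type} (zero : I) (c : W -> W -> I * J)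
    (x : W -> W -> R) (e : R) :
  0 < e -> (forall a, in_XA zero c (x a)) ->
  exists (y : W -> W -> R) (F : W -> list W), (forall a z, ~ In z (F a) -> y a z = 0) /\
    (forall a l, in_family zero c l -> l2 (vsub (x a) (y a)) l <= e).
Proof.
  intros He Hx.
  destruct (choice (fun a (p : (W -> R) * list W) => (forall z, ~ In z (snd p) -> fst p z = 0) /\
                      forall l, in_family zero c l -> l2 (vsub (x a) (fst p)) l <= e))
    as [p Hp].
  { intro a. destruct (proj2 (Hx a) e He) as (ya & [F HF] & Hclose).
    exists (ya, F). split; [exact HF |]. intros l Hl.
    apply (l2_le_normA _ _ _ zero c); [apply Rbar_lt_le, Hclose | exact Hl]. }
  exists (fun a => fst (p a)), (fun a => snd (p a)). split; intro a; apply Hp.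
Qed.

Theorem proposition4p2 :
  forall (W : Type) (lt : W -> W -> Prop), is_omega1 W lt ->
  forall (I J : Type) (zero one : I) (c : W -> W -> I * J),
  strong_T_coloring lt zero one c ->
  forall delta : R, 0 < delta ->
  exists eps : R, 0 < eps /\
  forall x : W -> (W -> R),
    (forall al be, al <> be -> x al <> x be) ->
    (forall al, in_XA zero c (x al) /\ normA zero c (x al) = Finite 1) ->
    (forall al be, al <> be ->
       Rbar_le (Finite (1 - eps)) (normA zero c (vsub (x al) (x be)))) ->
    (exists al be, lt al be /\
       Rbar_lt (Finite (sqrt 2 - delta)) (normA zero c (vsub (x al) (x be)))) /\
    (exists xi eta, lt xi eta /\
       Rbar_lt (normA zero c (vsub (x xi) (x eta))) (Finite (1 + delta))).
Proof.
  intros W lt Hw I J zero one c Hc delta Hdelta.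
  set (e := Rmin delta 1 / 20).
  assert (He : 0 < e <= 1 / 20)
    by (unfold e; pose proof (Rmin_r delta 1); pose proof (Rmin_glb_lt delta 1 0); lra).
  assert (Hde : 20 * e <= delta) by (unfold e; pose proof (Rmin_l delta 1); lra).
  exists e. split; [lra |]. intros x _ Hx Hsep.
  assert (Hunit : forall a l, in_family zero c l -> l2 (x a) l <= 1).
  { intros a l. apply l2_le_normA. rewrite (proj2 (Hx a)). apply Rle_refl. }
  destruct (finitely_supported_approximants zero c x e (proj1 He) (fun a => proj1 (Hx a)))
    as (y & F & Hy_supp & Hy_close).
  destruct (uniform_subfamily W lt Hw e He y F)
    as (root & S & HS & Hdisj & Hclose).
  destruct (separated_family_pairs W lt Hw I J zero one c Hc e He x Hunit Hsep y F
              Hy_supp Hy_close root S Hdisj Hclose HS)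
    as [(a & b & Hab & Hfar) (a' & b' & Hab' & Hnear)].
  split; [exists a, b | exists a', b']; split; auto.
  - apply (Rbar_le_lt_trans _ (Finite (sqrt 2 - 20 * e))); [simpl; lra | exact Hfar].
  - apply (Rbar_lt_le_trans _ (Finite (1 + 20 * e))); [exact Hnear | simpl; lra].
Qed.
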